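(* Let $G$ be a simple graph on $n$ nodes with $m$ edges in which every node has degree at least $2$, let $\mathcal{B}$ be its non-backtracking matrix, $\mathcal{D}_{row}$ the diagonal matrix of row sums of $\mathcal{B}$, and $\mathcal{T}=\mathcal{D}_{row}^{-1}\mathcal{B}$. Let $\lambda\in\mathbb{C}\setminus\mathbb{R}$ be an eigenvalue of $\mathcal{T}$ and $z\in\mathbb{C}^{2m}$ a right eigenvector: $\mathcal{T}z=\lambda z$. Then $\overline{\breve z}$ is a left eigenvector of $\mathcal{T}$ with the same eigenvalue $\lambda$, i.e. $\mathcal{T}^*\,\overline{\breve z}=\bar\lambda\,\overline{\breve z}$.
   Context: Each edge $\{i,j\}$ of $G$ is considered in both orientations, giving the set $E^{\rightarrow}$ of $2m$ oriented edges. For an oriented edge $e=[i,j]$, $\mathrm{in}(e)=i$, $\mathrm{out}(e)=j$, and $e^{-1}=[j,i]$. The non-backtracking matrix $\mathcal{B}=(b_{ef})_{e,f\in E^{\rightarrow}}$ has $b_{ef}=1$ if $\mathrm{out}(e)=\mathrm{in}(f)$ and $f\neq e^{-1}$, else $0$. The diagonal entry of $\mathcal{D}_{row}$ at $e=[i,j]$ is $d_j-1$. For $x\in\mathbb{C}^{2m}$, $\breve x_e=x_{e^{-1}}$; the bar denotes entrywise complex conjugation and ${}^*$ the conjugate transpose. A vector $v$ is a left eigenvector of $A$ with eigenvalue $\lambda$ if $v^*A=\lambda v^*$. *)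

From HB Require Import structures.
From mathcomp Require Import all_boot all_order all_algebra.
Set Implicit Arguments. Unset Strict Implicit. Unset Printing Implicit Defensive.
Import Order.TTheory GRing.Theory Num.Theory.
Local Open Scope ring_scope.

Record sgraph (V : finType) := SGraph {
  adj : rel V;
  adj_sym : symmetric adj;
  adj_irr : irreflexive adj }.

Section Darts.
Variables (V : finType) (G : sgraph V).

Definition deg (v : V) : nat := #|[set w | adj G v w]|.

Definition dart := {p : V * V | adj G p.1 p.2}.

Definition din (e : dart) : V := (val e).1.
Definition dout (e : dart) : V := (val e).2.

Lemma rev_dart_proof (e : dart) : adj G (val e).2 (val e).1.
Proof. by rewrite adj_sym; case: e. Qed.

Definition rev_dart (e : dart) : dart :=
  exist _ ((val e).2, (val e).1) (rev_dart_proof e).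

Definition nd := #|{: dart}|.

Variable C : numClosedFieldType.

Definition nbm : 'M[C]_nd :=
  \matrix_(i, j) (((dout (enum_val i) == din (enum_val j))
                   && (enum_val j != rev_dart (enum_val i)))%:R).

Definition Drow : 'M[C]_nd := diag_mx (\row_i (\sum_j nbm i j)).

Definition Tmat : 'M[C]_nd := invmx Drow *m nbm.

Definition breve (x : 'cV[C]_nd) : 'cV[C]_nd :=
  \col_i x (enum_rank (rev_dart (enum_val i))) 0.

End Darts.

Definition cconjmx (C : numClosedFieldType) m n (A : 'M[C]_(m, n)) :=
  map_mx (fun x => x^*) A.
Definition cadjmx (C : numClosedFieldType) m n (A : 'M[C]_(m, n)) :=
  (cconjmx A)^T.

From HB Require Import structures.
From mathcomp Require Import all_boot all_order all_algebra.
Set Implicit Arguments. Unset Strict Implicit. Unset Printing Implicit Defensive.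
Import Order.TTheory GRing.Theory Num.Theory.
Local Open Scope ring_scope.

(* The non-backtracking matrix satisfies [B f e = B e^-1 f^-1], and the row
   sums at [f] and at [e^-1] agree whenever [B f e <> 0] (both are
   [d_(out f) - 1]); hence [T] has the same symmetry.  In matrix form this is
   [T^T P = P T] for the permutation [P x = breve x], so [T z = lam z] gives
   [T^T (breve z) = lam (breve z)], and conjugating entrywise yields the claim. *)

Section ReversalSymmetry.
Variables (n : nat) (r : 'I_n -> 'I_n).

Definition rev_symmetric (R : Type) (A : 'M[R]_n) := forall i j, A i j = A (r j) (r i).

Lemma trmx_mul_rowsub (R : pzSemiRingType) (A : 'M[R]_n) p (x : 'M[R]_(n, p)) :
  involutive r -> rev_symmetric A -> A^T *m rowsub r x = rowsub r (A *m x).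
Proof.
move=> rK symA; apply/matrixP => i k; rewrite !mxE (reindex_inj (can_inj rK)).
by apply: eq_bigr => j _; rewrite !mxE rK symA rK.
Qed.

Lemma invmx_diag_mx (F : fieldType) (d : 'rV[F]_n) :
  (forall i, d 0 i != 0) -> invmx (diag_mx d) = diag_mx (map_mx GRing.inv d).
Proof.
move=> d_neq0; have inv_d : diag_mx d *m diag_mx (map_mx GRing.inv d) = 1%:M.
  apply/matrixP => i j; rewrite mul_diag_mx !mxE.
  by case: eqP => [->|]; rewrite ?mulr1n ?mulfV ?mulr0n ?mulr0.
by rewrite -[invmx _]mulmx1 -inv_d mulKmx //; case: (mulmx1_unit inv_d).
Qed.

Lemma rev_symmetric_invmx_diag_mul (F : fieldType) (d : 'rV[F]_n) (B : 'M[F]_n) :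
  rev_symmetric B -> (forall i j, B i j != 0 -> d 0 i = d 0 (r j)) ->
  rev_symmetric (invmx (diag_mx d) *m B).
Proof.
move=> symB d_rev.
have [h invdE] : exists h : F -> F, invmx (diag_mx d) = diag_mx (map_mx h d).
  case/boolP: (diag_mx d \in unitmx) => [d_unit | d_nunit].
    exists GRing.inv; apply: invmx_diag_mx => i; move: d_unit.
    by rewrite unitmxE unitfE det_diag => /prodf_neq0/(_ i isT).
  (* junk value: [invmx] of a singular matrix is the matrix itself *)
  by exists id; rewrite invmx_out // map_mx_id.
move=> i j; rewrite invdE !mul_diag_mx !mxE -symB.
by have [->|/d_rev->] := eqVneq (B i j) 0; rewrite ?mulr0.
Qed.

End ReversalSymmetry.

Section NonBacktracking.
Variables (V : finType) (G : sgraph V) (C : numClosedFieldType).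

Local Notation ev := (@enum_val (dart G) (mem predT)).

Lemma rev_dartK : involutive (@rev_dart V G).
Proof. by case=> [[a b] h]; apply: val_inj. Qed.

Definition rev_index (i : 'I_(nd G)) : 'I_(nd G) := enum_rank (rev_dart (ev i)).

Lemma enum_val_rev_index i : ev (rev_index i) = rev_dart (ev i).
Proof. exact: enum_rankK. Qed.

Lemma rev_indexK : involutive rev_index.
Proof. by move=> i; rewrite /rev_index enum_rankK rev_dartK enum_valK. Qed.

Lemma breveE (x : 'cV[C]_(nd G)) : breve x = rowsub rev_index x.
Proof. by apply/matrixP => i k; rewrite !mxE (ord1 k). Qed.

Lemma nbm_rev_symmetric : rev_symmetric rev_index (nbm G C).
Proof.
move=> i j; rewrite !mxE !enum_val_rev_index rev_dartK.
by rewrite [din _ == _]eq_sym [rev_dart _ == _]eq_sym.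
Qed.

Lemma nbm_row_sumE i :
  \sum_j nbm G C i j = \sum_j ((dout (ev i) == din (ev j))%:R : C) - 1.
Proof.
have nbmE j : nbm G C i j = (dout (ev i) == din (ev j))%:R - (j == rev_index i)%:R.
  rewrite mxE -enum_val_rev_index (inj_eq enum_val_inj).
  have [->|_] := eqVneq j (rev_index i); last by rewrite andbT subr0.
  by rewrite enum_val_rev_index eqxx andbF subrr.
rewrite (eq_bigr _ (fun j _ => nbmE j)) sumrB; congr (_ - _).
by rewrite (bigD1 (rev_index i)) //= eqxx big1 ?addr0 // => j /negbTE->.
Qed.

Lemma nbm_row_sum_rev i j : nbm G C i j != 0 ->
  \sum_k nbm G C i k = \sum_k nbm G C (rev_index j) k.
Proof.
rewrite mxE; have [out_in _|] := eqVneq (dout (ev i)) (din (ev j)); last by rewrite eqxx.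
by rewrite !nbm_row_sumE enum_val_rev_index out_in.
Qed.

Lemma Tmat_rev_symmetric : rev_symmetric rev_index (Tmat G C).
Proof.
apply: rev_symmetric_invmx_diag_mul nbm_rev_symmetric _ => i j.
by move/nbm_row_sum_rev; rewrite !mxE.
Qed.

End NonBacktracking.

Theorem mainTheorem3 (C : numClosedFieldType) (V : finType) (G : sgraph V)
  (hdeg : forall v : V, (2 <= deg G v)%N)
  (lam : C) (hlam : lam \notin Num.real)
  (z : 'cV[C]_(nd G)) (hz : z != 0)
  (heig : Tmat G C *m z = lam *: z) :
  cadjmx (Tmat G C) *m cconjmx (breve z) = lam^* *: cconjmx (breve z).
Proof.
have Tbreve : (Tmat G C)^T *m breve z = lam *: breve z.
  rewrite !breveE (trmx_mul_rowsub _ (@rev_indexK _ G) (@Tmat_rev_symmetric _ G C)).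
  by rewrite heig linearZ.
by rewrite /cadjmx /cconjmx map_trmx -map_mxM Tbreve map_mxZ.
Qed.
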